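(* Let $\mathbf{x}_1,\dots,\mathbf{x}_n$ be examples with instance labels $y_i^I=i$, target labels $y_i^F\in\{1,\dots,F\}$ where every target class contains exactly $z$ examples ($zF=n$), and coarse labels $y_i^C\in\{1,\dots,C\}$ such that examples with the same target label have the same coarse label. Let $f^H$ be a feature map to $\mathbb{R}^d$, let $W^I=(\mathbf{w}^I_1,\dots,\mathbf{w}^I_n)\in\mathbb{R}^{d\times n}$, and let $W^C=(\mathbf{w}^C_1,\dots,\mathbf{w}^C_C)\in\mathbb{R}^{d\times C}$. Define \[\Pr\{y_i^I\mid f^H(\mathbf{x}_i),W^I\}=\frac{\exp(f^H(\mathbf{x}_i)^\top\mathbf{w}^I_{y_i^I})}{\sum_{j=1}^n\exp(f^H(\mathbf{x}_i)^\top\mathbf{w}^I_j)},\qquad \Pr\{y_i^C\mid f^H(\mathbf{x}_i),W^C\}=\frac{\exp(f^H(\mathbf{x}_i)^\top\mathbf{w}^C_{y_i^C})}{\sum_{k=1}^C\exp(f^H(\mathbf{x}_i)^\top\mathbf{w}^C_k)},\] \[\Pr\{y_i^F\mid f^H(\mathbf{x}_i),W^I\}=\frac{\exp(f^H(\mathbf{x}_i)^\top\bar{\mathbf{w}}^I_{y_i^F})}{\sum_{s=1}^F\exp(f^H(\mathbf{x}_i)^\top\bar{\mathbf{w}}^I_s)},\qquad \bar{\mathbf{w}}^I_s=\frac1z\sum_{j:\,y_j^F=s}\mathbf{w}^I_j.\] Assume $\|f^H(\mathbf{x}_i)\|_2\le c$, $\|\mathbf{w}^I_j\|_2\le c$ and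 $\|\mathbf{w}^C_k\|_2\le c$ for all $i,j,k$. Assume also that, for all $i$, $\Pr\{y_i^I\mid f^H(\mathbf{x}_i),W^I\}\ge\alpha$ and $\Pr\{y_i^C\mid f^H(\mathbf{x}_i),W^C\}\ge\beta$. Then there is a constant $h(c,\alpha,\beta)\le1$, depending on $c,\alpha,\beta$, such that for all $i$ \[\Pr\{y_i^F\mid f^H(\mathbf{x}_i),W^I\}\ge\alpha z\,h(c,\alpha,\beta).\]
   Context: The setting is a network with a shared feature extractor $f^H$ and two fully-connected heads without bias: $W^C$ for coarse-class classification and $W^I$ for instance classification. They are trained jointly by minimizing $\sum_i\ell(\mathbf{x}_i,y_i^C)+\lambda\sum_i\ell(\mathbf{x}_i,y_i^I)$ with softmax cross-entropy $\ell$. The constants $\alpha,\beta$ are the accuracies this training achieves, and $\lambda$ trades them off. The result itself is a statement about any $f^H$, $W^I$, $W^C$ that satisfy the hypotheses. *)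

From mathcomp Require Import all_boot all_order all_algebra.
From mathcomp Require Import reals sequences exp.
Set Implicit Arguments. Unset Strict Implicit. Unset Printing Implicit Defensive.
Import Order.TTheory GRing.Theory Num.Theory.
Local Open Scope ring_scope.

Definition dotv (R : realType) (d : nat) (u v : 'rV[R]_d) : R :=
  \sum_(k < d) u 0 k * v 0 k.

Definition norm2 (R : realType) (d : nat) (u : 'rV[R]_d) : R :=
  Num.sqrt (dotv u u).

Definition softmax_prob (R : realType) (d K : nat)
  (f : 'rV[R]_d) (W : 'I_K -> 'rV[R]_d) (y : 'I_K) : R :=
  expR (dotv f (W y)) / \sum_(k < K) expR (dotv f (W k)).

Definition wbar (R : realType) (d n F : nat) (z : nat)
  (yF : 'I_n -> 'I_F) (WI : 'I_n -> 'rV[R]_d) (s : 'I_F) : 'rV[R]_d :=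
  (z%:R)^-1 *: \sum_(j < n | yF j == s) WI j.

From mathcomp Require Import all_boot all_order all_algebra.
From mathcomp Require Import reals sequences exp.
From mathcomp Require Import ring lra.
Import Order.TTheory GRing.Theory Num.Theory.
Local Open Scope ring_scope.

(* Since every logit f^T w lies in [-c^2, c^2], a softmax over K labels lies
   within a factor exp(2 c^2) of the uniform value 1/K.  The instance head thus
   forces alpha <= exp(2 c^2) / n, while the averaged target head gives a
   probability of at least exp(-2 c^2) / F = z exp(-2 c^2) / n; together these
   yield the claim with h = exp(-4 c^2). *)

Section DotProduct.
Context {R : realType} {d : nat}.
Implicit Types (u v : 'rV[R]_d) (c : R).

Lemma dotv_ge0 u : 0 <= dotv u u.
Proof. by apply: sumr_ge0 => k _; rewrite -expr2 sqr_ge0. Qed.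

Lemma dotv_le_sqr u c : norm2 u <= c -> dotv u u <= c ^+ 2.
Proof.
move=> le_uc; rewrite -(sqr_sqrtr (dotv_ge0 u)).
by apply: ler_pM => //; apply: sqrtr_ge0.
Qed.

Lemma normr_dotv_le_mean u v : 2 * `|dotv u v| <= dotv u u + dotv v v.
Proof.
have sqD : dotv u u + dotv v v + 2 * dotv u v = \sum_(k < d) (u 0 k + v 0 k) ^+ 2.
  by rewrite /dotv mulr_sumr -!big_split; apply: eq_bigr => k _ /=; ring.
have sqB : dotv u u + dotv v v - 2 * dotv u v = \sum_(k < d) (u 0 k - v 0 k) ^+ 2.
  by rewrite /dotv mulr_sumr -big_split -sumrB; apply: eq_bigr => k _ /=; ring.
have sqD_ge0 : 0 <= \sum_(k < d) (u 0 k + v 0 k) ^+ 2.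
  by apply: sumr_ge0 => k _; apply: sqr_ge0.
have sqB_ge0 : 0 <= \sum_(k < d) (u 0 k - v 0 k) ^+ 2.
  by apply: sumr_ge0 => k _; apply: sqr_ge0.
rewrite -[2]ger0_norm // -normrM ler_norml; apply/andP; split; lra.
Qed.

Lemma normr_dotv_le_sqr {u v c} :
  norm2 u <= c -> norm2 v <= c -> `|dotv u v| <= c ^+ 2.
Proof.
move=> /dotv_le_sqr le_uu /dotv_le_sqr le_vv.
have := normr_dotv_le_mean u v; lra.
Qed.

Lemma dotvZr u a v : dotv u (a *: v) = a * dotv u v.
Proof.
by rewrite /dotv mulr_sumr; apply: eq_bigr => k _; rewrite mxE mulrCA.
Qed.

Lemma dotv_sumr (I : finType) (P : pred I) u (v : I -> 'rV[R]_d) :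
  dotv u (\sum_(i | P i) v i) = \sum_(i | P i) dotv u (v i).
Proof.
rewrite /dotv exchange_big /=; apply: eq_bigr => k _.
by rewrite summxE mulr_sumr.
Qed.

End DotProduct.

Section SoftmaxBounds.
Context {R : realType} {d K : nat} {f : 'rV[R]_d} {W : 'I_K -> 'rV[R]_d} {m : R}.
Hypothesis logit_le : forall k, `|dotv f (W k)| <= m.

Lemma expR_logit_bounds k :
  expR (- m) <= expR (dotv f (W k)) <= expR m.
Proof. by rewrite !ler_expR -ler_norml. Qed.

Lemma sum_expR_logit_bounds :
  K%:R * expR (- m) <= \sum_(k < K) expR (dotv f (W k)) <= K%:R * expR m.
Proof.
have sum_const a : \sum_(k < K) a = K%:R * a.
  by rewrite sumr_const card_ord mulr_natl.
rewrite -!sum_const; apply/andP; split; apply: ler_sum => k _;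
  by case/andP: (expR_logit_bounds k).
Qed.

Lemma softmax_prob_le y : softmax_prob f W y <= expR (2 * m) / K%:R.
Proof.
have K_gt0 : (0 < K)%N by apply: leq_ltn_trans (ltn_ord y).
have Kr_gt0 : (0 : R) < K%:R by rewrite ltr0n.
have /andP[le_KS _] := sum_expR_logit_bounds.
have S_gt0 := lt_le_trans (mulr_gt0 Kr_gt0 (expR_gt0 (- m))) le_KS.
rewrite /softmax_prob ler_pdivrMr //; apply: le_trans (_ : expR m <= _).
  by case/andP: (expR_logit_bounds y).
apply: le_trans (_ : expR (2 * m) / K%:R * (K%:R * expR (- m)) <= _).
  by rewrite mulrA divfK ?gt_eqF // -expRD ler_expR; lra.
by apply: ler_wpM2l => //; rewrite divr_ge0 ?expR_ge0 ?ler0n.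
Qed.

Lemma softmax_prob_ge y : expR (- (2 * m)) / K%:R <= softmax_prob f W y.
Proof.
have K_gt0 : (0 < K)%N by apply: leq_ltn_trans (ltn_ord y).
have Kr_gt0 : (0 : R) < K%:R by rewrite ltr0n.
have /andP[le_KS le_SK] := sum_expR_logit_bounds.
have S_gt0 := lt_le_trans (mulr_gt0 Kr_gt0 (expR_gt0 (- m))) le_KS.
rewrite /softmax_prob ler_pdivlMr //; apply: le_trans (_ : expR (- m) <= _).
  apply: le_trans (_ : expR (- (2 * m)) / K%:R * (K%:R * expR m) <= _).
    by apply: ler_wpM2l => //; rewrite divr_ge0 ?expR_ge0 ?ler0n.
  by rewrite mulrA divfK ?gt_eqF // -expRD ler_expR; lra.
by case/andP: (expR_logit_bounds y).
Qed.

End SoftmaxBounds.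

Lemma normr_dotv_wbar_le (R : realType) (d n F z : nat) (yF : 'I_n -> 'I_F)
    (f : 'rV[R]_d) (WI : 'I_n -> 'rV[R]_d) (m : R) (s : 'I_F) :
  (0 < z)%N -> #|[set j | yF j == s]| = z ->
  (forall j, `|dotv f (WI j)| <= m) ->
  `|dotv f (wbar z yF WI s)| <= m.
Proof.
move=> z_gt0 card_s logit_le.
have zr_gt0 : (0 : R) < z%:R by rewrite ltr0n.
rewrite /wbar dotvZr dotv_sumr normrM ger0_norm ?invr_ge0 ?ler0n //.
rewrite ler_pdivrMl //; apply: le_trans (ler_norm_sum _ _ _) _.
apply: le_trans (_ : \sum_(j | yF j == s) m <= _); first exact: ler_sum.
by rewrite sumr_const -cardsE card_s mulr_natl.
Qed.

Theorem theorem1 (R : realType) :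
  exists h : R -> R -> R -> R,
    (forall c alpha beta, 0 < h c alpha beta <= 1) /\
    forall (X : Type) (n F C z d : nat)
      (x : 'I_n -> X) (yF : 'I_n -> 'I_F) (yC : 'I_n -> 'I_C)
      (fH : X -> 'rV[R]_d) (WI : 'I_n -> 'rV[R]_d) (WC : 'I_C -> 'rV[R]_d)
      (c alpha beta : R),
      (forall s : 'I_F, #|[set j : 'I_n | yF j == s]| = z) ->
      (z * F = n)%N ->
      (forall i j : 'I_n, yF i = yF j -> yC i = yC j) ->
      (forall i, norm2 (fH (x i)) <= c) ->
      (forall j, norm2 (WI j) <= c) ->
      (forall k, norm2 (WC k) <= c) ->
      (forall i, softmax_prob (fH (x i)) WI i >= alpha) ->
      (forall i, softmax_prob (fH (x i)) WC (yC i) >= beta) ->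
      forall i : 'I_n,
        softmax_prob (fH (x i)) (wbar z yF WI) (yF i)
          >= alpha * z%:R * h c alpha beta.
Proof.
exists (fun c _ _ => expR (- (4 * c ^+ 2))); split.
  by move=> c _ _; rewrite expR_gt0 expR_le1 oppr_le0 mulr_ge0 ?sqr_ge0.
move=> X n F C z d x yF yC fH WI WC c alpha beta card_yF zF_n _
  le_fH le_WI _ ge_alpha _ i.
set m := c ^+ 2; set fi := fH (x i).
have /andP[z_gt0 F_gt0] : (0 < z)%N && (0 < F)%N.
  by rewrite -muln_gt0 zF_n (leq_ltn_trans _ (ltn_ord i)).
have logitI j : `|dotv fi (WI j)| <= m := normr_dotv_le_sqr (le_fH i) (le_WI j).
have logitF s : `|dotv fi (wbar z yF WI s)| <= m.
  exact: normr_dotv_wbar_le z_gt0 (card_yF s) logitI.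
have alpha_le : alpha <= expR (2 * m) / n%:R.
  exact: le_trans (ge_alpha i) (softmax_prob_le logitI i).
apply: le_trans (softmax_prob_ge logitF (yF i)).
apply: le_trans (_ : expR (2 * m) / n%:R * z%:R * expR (- (4 * m)) <= _).
  by rewrite ler_wpM2r ?expR_ge0 // ler_wpM2r ?ler0n.
have -> : expR (- (2 * m)) = expR (2 * m) * expR (- (4 * m)).
  by rewrite -expRD; congr expR; ring.
rewrite -zF_n natrM; move: (expR _) (expR _) => a b.
rewrite le_eqVlt; apply/orP; left; apply/eqP; field.
by rewrite !pnatr_eq0 -!lt0n z_gt0 F_gt0.
Qed.
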